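(* $\displaystyle\liminf_{k\to\infty}\frac{\Gamma(k)}{k}=\frac32.$
   Context: The Thue–Morse word is $\mathbf t=\mathbf t_1\mathbf t_2\cdots$ where $\mathbf t_i\in\{0,1\}$ has the parity of the number of $1$'s in the binary expansion of $i-1$. For positive integers $\alpha\le\beta$, $\langle\alpha,\beta\rangle=\mathbf t_\alpha\cdots\mathbf t_\beta$. A $k$-anti-power is a word $w_1\cdots w_k$ with $w_1,\dots,w_k$ pairwise distinct words of equal length. $\mathcal F(k)$ is the set of odd positive integers $m$ such that $\langle 1,km\rangle$ is a $k$-anti-power. For $k\ge3$, $\Gamma(k)=\sup\big((2\mathbb Z^+-1)\setminus\mathcal F(k)\big)$, which is a finite odd positive integer. *)

From HB Require Import structures.
From mathcomp Require Import all_boot all_order all_algebra.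
Set Implicit Arguments. Unset Strict Implicit. Unset Printing Implicit Defensive.
Import Order.TTheory GRing.Theory Num.Theory.

(* number of 1's in the binary expansion of n (fuel-based recursion; fuel n suffices) *)
Fixpoint popcount_fuel (fuel n : nat) : nat :=
  match fuel with
  | 0 => 0
  | f.+1 => odd n + popcount_fuel f n./2
  end.
Definition popcount (n : nat) : nat := popcount_fuel n n.

(* Thue-Morse word, 1-indexed: t_i = parity of popcount (i-1) *)
Definition tm (i : nat) : bool := odd (popcount i.-1).

Definition tm_factor (alpha beta : nat) : seq bool :=
  [seq tm i | i <- iota alpha (beta.+1 - alpha)].

Definition anti_power (k : nat) (w : seq bool) : Prop :=
  exists ws : seq (seq bool),
    [/\ size ws = k, flatten ws = w,
        all (fun u => size u == size (head [::] ws)) ws & uniq ws].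

Definition inF (k m : nat) : Prop :=
  odd m /\ 0 < m /\ anti_power k (tm_factor 1 (k * m)).

(* m is an odd positive integer not in F(k); Gamma(k) is the sup of these *)
Definition bad (k m : nat) : Prop := odd m /\ 0 < m /\ ~ inF k m.

(* Cut <1, km> into k blocks of length m, so that m is bad exactly when two
   blocks coincide.  Thue-Morse satisfies t(2^b q + s) = t(q) + t(s) for
   s < 2^b, so comparing blocks i < j at offsets that are multiples of 2^e
   compares the letters of t at q + c and q' + c.
   Upper bound: for k = 2^(n+1) and odd m > 3 * 2^n, write j - i = 2^e u with
   u odd; offsets c 2^e with c < 4 fit in a block and q' = q + u m has the
   other parity, whereas a length-4 factor of t occurring at an even and at an
   odd position would contain three equal consecutive letters.  Hence
   Gamma(2^(n+1)) <= 3 * 2^n.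
   Lower bound: for 2^b + 3 <= k < 2^(b+1) + 3, some blocks i and i + 2^b
   coincide for one of m = 2^(b+1) - 1, 3 * 2^b - 3, 3 * 2^b - 9, because
   only three letters at scale 2^b have to agree; this gives
   Gamma(k) >= 3k/2 - 12. *)

From HB Require Import structures.
From mathcomp Require Import all_boot all_order all_algebra.
From mathcomp Require Import zify ring lra.
Import Order.TTheory GRing.Theory Num.Theory.

Lemma popcount_fuel0 f : popcount_fuel f 0 = 0.
Proof. by elim: f => //= f ->. Qed.

Lemma popcount_fuel_enough f g n :
  n <= f -> n <= g -> popcount_fuel f n = popcount_fuel g n.
Proof.
elim: f g n => [|f IHf] [|g] n //= nf ng; try by rewrite (_ : n = 0) ?popcount_fuel0; lia.
by congr (_ + _); apply: IHf; lia.
Qed.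

Lemma popcount_half n : popcount n = odd n + popcount n./2.
Proof.
by case: n => // n; rewrite /popcount /=; congr (_ + _); apply: popcount_fuel_enough; lia.
Qed.

Definition thue_morse n := odd (popcount n).

Lemma thue_morse_half n : thue_morse n = odd n (+) thue_morse n./2.
Proof. by rewrite /thue_morse popcount_half oddD oddb. Qed.

Lemma thue_morse_addpow b q s :
  s < 2 ^ b -> thue_morse (2 ^ b * q + s) = thue_morse q (+) thue_morse s.
Proof.
elim: b q s => [|b IHb] q s s_lt.
  by rewrite (_ : s = 0) ?expn0 ?mul1n ?addn0 ?addbF //; rewrite expn0 in s_lt; lia.
have -> : 2 ^ b.+1 * q + s = odd s + (2 ^ b * q + s./2).*2.
  by rewrite -{1}(odd_double_half s) expnS -!mul2n; ring.
rewrite thue_morse_half [thue_morse s]thue_morse_half half_bit_double.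
rewrite IHb; last by rewrite expnS in s_lt; lia.
by rewrite oddD oddb odd_double addbF addbCA.
Qed.

Lemma thue_morse_double n : thue_morse (2 * n) = thue_morse n.
Proof. by have := thue_morse_addpow 1 n 0 isT; rewrite addn0 addbF. Qed.

Lemma thue_morse_double1 n : thue_morse (2 * n).+1 = ~~ thue_morse n.
Proof. by have := thue_morse_addpow 1 n 1 isT; rewrite addn1 addbT. Qed.

Lemma thue_morse_pow2 a : thue_morse (2 ^ a) = true.
Proof. by have := thue_morse_addpow a 1 0 (expn_gt0 2 a); rewrite muln1 addn0 addbF. Qed.

Lemma thue_morse_pow2_sub1 a : thue_morse (2 ^ a - 1) = odd a.
Proof.
elim: a => // a IHa.
rewrite (_ : 2 ^ a.+1 - 1 = (2 * (2 ^ a - 1)).+1) ?thue_morse_double1 ?IHa //.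
by rewrite expnS; have := expn_gt0 2 a; lia.
Qed.

Lemma thue_morse_no_triple n :
  ~ (thue_morse n = thue_morse n.+1 /\ thue_morse n.+1 = thue_morse n.+2).
Proof.
have flip c : thue_morse (2 * c) != thue_morse (2 * c).+1.
  by rewrite thue_morse_double1 thue_morse_double; case: thue_morse.
case=> e1 e2; have := odd_double_half n; rewrite -mul2n; set c := n./2.
case: odd => /= n_eq.
- rewrite (_ : n.+1 = 2 * c.+1) ?(_ : n.+2 = (2 * c.+1).+1) in e2; try lia.
  by move: (flip c.+1); rewrite e2 eqxx.
- by move: (flip c) e1; rewrite -n_eq add0n => /eqP.
Qed.

Lemma thue_morse_factor4_parity x y : odd x != odd y ->
  ~ (forall c, c < 4 -> thue_morse (x + c) = thue_morse (y + c)).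
Proof.
wlog odd_y : x y / odd y.
  move=> hwlog xy; case/boolP: (odd y) => [odd_y | even_y]; first exact: hwlog.
  move=> eq4; apply: (hwlog y x) => [|| c /eq4 ->] //; last by rewrite eq_sym.
  by case: (odd x) xy; rewrite (negbTE even_y).
move=> xy eq4; have even_x : ~~ odd x by case: (odd x) xy; rewrite odd_y.
have [a x_eq] : exists a, x = 2 * a.
  by exists x./2; have := odd_double_half x; rewrite (negbTE even_x) -mul2n /=; lia.
have [b y_eq] : exists b, y = (2 * b).+1.
  by exists y./2; have := odd_double_half y; rewrite odd_y -mul2n /=; lia.
have eqc c x' y' : c < 4 -> x + c = x' -> y + c = y' -> thue_morse x' = thue_morse y'.
  by move=> /eq4 + <- <-.
have := eqc 0 (2 * a) ((2 * b).+1) isT ltac:(lia) ltac:(lia).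
have := eqc 1 ((2 * a).+1) (2 * b.+1) isT ltac:(lia) ltac:(lia).
have := eqc 2 (2 * a.+1) ((2 * b.+1).+1) isT ltac:(lia) ltac:(lia).
have := eqc 3 ((2 * a.+1).+1) (2 * b.+2) isT ltac:(lia) ltac:(lia).
rewrite !thue_morse_double !thue_morse_double1 => e3 e2 e1 e0.
apply: (thue_morse_no_triple b); split.
- by move: e0 e1; case: thue_morse; case: thue_morse; case: thue_morse.
- by move: e2 e3; case: thue_morse; case: thue_morse; case: thue_morse.
Qed.

Lemma nth_flatten_uniform {T : Type} m (ws : seq (seq T)) i :
  all (fun u => size u == m) ws -> i < size ws ->
  nth [::] ws i = take m (drop (i * m) (flatten ws)).
Proof.
elim: ws i => [|u ws IHws] [|i] //= /andP[/eqP size_u all_ws] i_lt.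
  by rewrite drop0 take_size_cat.
by rewrite mulSnr -drop_drop drop_size_cat // IHws.
Qed.

(* [block m i] is the factor <i m + 1, (i + 1) m>. *)
Definition block m i := [seq thue_morse x | x <- iota (i * m) m].
Definition blocks k m := [seq block m i | i <- iota 0 k].

Lemma size_block m i : size (block m i) = m.
Proof. by rewrite size_map size_iota. Qed.

Lemma tm_factor_blocks k m : tm_factor 1 (k * m) = flatten (blocks k m).
Proof.
rewrite /tm_factor subSS subn0 -[iota 1 _]/(iota (1 + 0) _) iotaDl -map_comp.
rewrite (eq_map (_ : tm \o addn 1 =1 thue_morse)) //.
elim: k => // k IHk.
by rewrite mulSnr iotaD map_cat IHk /blocks -addn1 iotaD map_cat flatten_cat /= cats0.
Qed.

Lemma block_eqP m i j : block m i = block m j <->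
  forall x, x < m -> thue_morse (i * m + x) = thue_morse (j * m + x).
Proof.
split=> [eq_ij x x_lt | eq_ij].
  have := congr1 (nth false ^~ x) eq_ij.
  by rewrite /block !(nth_map 0) ?size_iota // !nth_iota.
rewrite /block -[i * m]addn0 -[j * m]addn0 !iotaDl -!map_comp.
by apply/eq_in_map => x; rewrite mem_iota => /andP[_ x_lt]; apply: eq_ij.
Qed.

Lemma anti_power_blocks k m : 0 < k -> 0 < m ->
  anti_power k (flatten (blocks k m)) <->
  forall i j, i < k -> j < k -> block m i = block m j -> i = j.
Proof.
move=> k_gt0 m_gt0; have size_blocks : all (fun u => size u == m) (blocks k m).
  by apply/allP => u /mapP[i _ ->]; rewrite size_block.
split=> [[ws [size_ws flat_ws sizes_ws uniq_ws]] | inj_blocks].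
  have head_ws : size (head [::] ws) = m.
    have size_flat : size (flatten ws) = k * size (head [::] ws).
      rewrite size_flatten /shape.
      have /all_pred1P -> : all (pred1 (size (head [::] ws))) (map size ws) by rewrite all_map.
      by rewrite size_map size_ws sumn_nseq mulnC.
    apply/eqP; rewrite -(eqn_pmul2l k_gt0) -size_flat flat_ws -tm_factor_blocks.
    by rewrite size_map size_iota subn1.
  rewrite head_ws in sizes_ws.
  have ws_blocks l : l < k -> nth [::] ws l = block m l.
    move=> l_lt; rewrite (nth_flatten_uniform m) ?size_ws // flat_ws.
    rewrite -(nth_flatten_uniform m) ?size_map ?size_iota //.
    by rewrite (nth_map 0) ?size_iota // nth_iota.
  move=> i j i_lt j_lt; rewrite -ws_blocks // -ws_blocks //.
  by move/eqP; rewrite nth_uniq ?size_ws // => /eqP.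
exists (blocks k m); split=> //; first by rewrite size_map size_iota.
  by case: k k_gt0 size_blocks {inj_blocks} => // k _; rewrite /= size_block.
rewrite map_inj_in_uniq ?iota_uniq // => i j; rewrite !mem_iota.
by move=> /andP[_ i_lt] /andP[_ j_lt]; apply: inj_blocks.
Qed.

Lemma inF_blocks k m : 0 < k -> odd m ->
  inF k m <-> forall i j, i < k -> j < k -> block m i = block m j -> i = j.
Proof.
move=> k_gt0 odd_m; have m_gt0 : 0 < m by case: m odd_m.
rewrite /inF tm_factor_blocks -anti_power_blocks //.
by split=> [[_ []] | ].
Qed.

Lemma thue_morse_coarse e q r c : r < 2 ^ e ->
  thue_morse (2 ^ e * q + r + c * 2 ^ e) = thue_morse (q + c) (+) thue_morse r.
Proof.
by move=> r_lt; rewrite (_ : _ + c * 2 ^ e = 2 ^ e * (q + c) + r) ?thue_morse_addpow //; ring.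
Qed.

Lemma blocks_distinct n m i j : odd m -> 3 * 2 ^ n < m -> i < j -> j < 2 ^ n.+1 ->
  block m i != block m j.
Proof.
move=> odd_m m_gt i_lt_j j_lt; apply/negP => /eqP/block_eqP eq_ij.
have [|u odd_u ji_eq] := pfactor_coprime (isT : prime 2) (_ : 0 < j - i); first lia.
rewrite coprime2n in odd_u; set e := logn 2 (j - i) in ji_eq.
have e_le : e <= n.
  rewrite -ltnS -(ltn_exp2l _ _ (ltnSn 1)); apply: leq_ltn_trans (_ : j - i < _); last by lia.
  by rewrite ji_eq leq_pmull //; case: (u) odd_u.
set q := i * m %/ 2 ^ e; set r := i * m %% 2 ^ e.
have r_lt : r < 2 ^ e by rewrite ltn_pmod ?expn_gt0.
have im_eq : i * m = 2 ^ e * q + r by rewrite /q /r [2 ^ e * _]mulnC -divn_eq.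
have jm_eq : j * m = 2 ^ e * (q + u * m) + r.
  rewrite (_ : j = i + (j - i)) 1?ji_eq; last by lia.
  by rewrite mulnDl im_eq; ring.
apply: (@thue_morse_factor4_parity q (q + u * m)).
  by rewrite oddD oddM odd_u odd_m; case: odd.
move=> c c_lt; apply: (@addIb (thue_morse r)).
rewrite -(thue_morse_coarse _ q _ c r_lt) -(thue_morse_coarse _ (q + u * m) _ c r_lt).
rewrite -im_eq -jm_eq; apply: eq_ij.
by apply: leq_ltn_trans m_gt; apply: leq_mul; rewrite ?leq_exp2l //; lia.
Qed.

Lemma inF_pow2 n m : odd m -> 3 * 2 ^ n < m -> inF (2 ^ n.+1) m.
Proof.
move=> odd_m m_gt; apply/inF_blocks => //; first exact: expn_gt0.
move=> i j i_lt j_lt eq_ij; case: (ltngtP i j) => // [ij | ji].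
- by move: (blocks_distinct _ _ _ _ odd_m m_gt ij j_lt); rewrite eq_ij eqxx.
- by move: (blocks_distinct _ _ _ _ odd_m m_gt ji i_lt); rewrite eq_ij eqxx.
Qed.

Lemma thue_morse_lift b L q q' r m : r < 2 ^ b -> r + m <= L.+1 * 2 ^ b ->
  (forall c, c <= L -> thue_morse (q + c) = thue_morse (q' + c)) ->
  forall x, x < m -> thue_morse (2 ^ b * q + r + x) = thue_morse (2 ^ b * q' + r + x).
Proof.
move=> r_lt rm_le eqL x x_lt; have pow_gt0 : 0 < 2 ^ b := expn_gt0 2 b.
set c := (r + x) %/ 2 ^ b; set s := (r + x) %% 2 ^ b.
have rx_eq : r + x = c * 2 ^ b + s := divn_eq _ _.
have c_le : c <= L by rewrite -ltnS ltn_divLR //; lia.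
have split_at p : 2 ^ b * p + r + x = 2 ^ b * (p + c) + s.
  by rewrite -addnA rx_eq mulnDr addnA [c * _]mulnC.
by rewrite !split_at !thue_morse_addpow ?ltn_pmod // eqL.
Qed.

Lemma bad_of_block_eq k m i j : odd m -> i < j -> j < k ->
  block m i = block m j -> bad k m.
Proof.
move=> odd_m i_lt_j j_lt eq_ij; split=> //; split; first by case: m odd_m {eq_ij}.
rewrite inF_blocks //; last by lia.
by move=> inj_blocks; move: (inj_blocks i j ltac:(lia) j_lt eq_ij); lia.
Qed.

Lemma bad_of_shift k m b i q r : odd m -> i + 2 ^ b < k ->
  i * m = 2 ^ b * q + r -> r < 2 ^ b -> r + m <= 3 * 2 ^ b ->
  (forall c, c <= 2 -> thue_morse (q + c) = thue_morse (q + m + c)) -> bad k m.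
Proof.
move=> odd_m i_lt im_eq r_lt rm_le eq3.
apply: (bad_of_block_eq _ _ i (i + 2 ^ b) odd_m _ i_lt).
  by rewrite -[ltnLHS]addn0 ltn_add2l expn_gt0.
apply/block_eqP => x x_lt.
rewrite im_eq (_ : (i + 2 ^ b) * m = 2 ^ b * (q + m) + r); last by rewrite mulnDl im_eq; ring.
exact: (thue_morse_lift _ 2 _ _ _ _ r_lt rm_le eq3).
Qed.

Lemma bad_double_sub1 k b : 2 ^ b.+2 + 2 < k -> bad k (2 * 2 ^ b.+2 - 1).
Proof.
set N := 2 ^ b.+2 => N_lt; have N_ge4 : 4 <= N by rewrite /N !expnS; have := expn_gt0 2 b; lia.
apply: (bad_of_shift _ _ b.+2 2 3 (N - 2)) => //; try lia.
move=> c c_le; rewrite (_ : 3 + (2 * N - 1) + c = 2 ^ b.+3 * 1 + (2 + c)); last first.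
  by rewrite expnS -/N; lia.
rewrite thue_morse_addpow; last by rewrite !expnS; have := expn_gt0 2 b; lia.
by case: c c_le => [|[|[|]]].
Qed.

Lemma bad_triple_sub3 k a i : odd a -> 3 * i + 1 = 2 ^ a.+3 -> i + 2 ^ a.+3 < k ->
  bad k (3 * 2 ^ a.+3 - 3).
Proof.
set N := 2 ^ a.+3; set A := 2 ^ a => odd_a i_eq i_lt.
have N_eq : N = 8 * A by rewrite /N /A !expnS; lia.
have A_gt0 : 0 < A := expn_gt0 2 a.
apply: (bad_of_shift _ _ a.+3 i (N - 2) 1) => //; try (rewrite -/N; nia).
move=> c c_le; rewrite (_ : N - 2 + (3 * N - 3) + c = 2 ^ 5 * (A - 1) + (27 + c)); last by lia.
rewrite thue_morse_addpow; last by lia.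
case: (ltnP c 2) => [c_lt | c_ge].
  rewrite (_ : N - 2 + c = 2 ^ 3 * (A - 1) + (6 + c)) ?thue_morse_addpow; try lia.
  by case: c {c_le} c_lt => [|[|]].
rewrite (_ : c = 2) ?subnK ?thue_morse_pow2 ?thue_morse_pow2_sub1 ?odd_a //; lia.
Qed.

Lemma bad_triple_sub9 k a i : 3 * i + 2 = 2 ^ a.+3 -> i + 2 ^ a.+3 < k ->
  bad k (3 * 2 ^ a.+3 - 9).
Proof.
set N := 2 ^ a.+3; set A := 2 ^ a => i_eq i_lt.
have N_eq : N = 8 * A by rewrite /N /A !expnS; lia.
have A_gt0 : 0 < A := expn_gt0 2 a.
apply: (bad_of_shift _ _ a.+3 i (N - 5) 6) => //; try (rewrite -/N; nia).
move=> c c_le; rewrite (_ : N - 5 + (3 * N - 9) + c = 2 ^ 5 * (A - 1) + (18 + c)); last by lia.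
rewrite (_ : N - 5 + c = 2 ^ 3 * (A - 1) + (3 + c)) ?thue_morse_addpow; try lia.
by case: c c_le => [|[|[|]]].
Qed.

Lemma pow2_mod3 a : 2 ^ a %% 3 = (if odd a then 2 else 1).
Proof. by elim: a => // a IHa; rewrite expnS -modnMmr IHa /=; case: odd. Qed.

Lemma exists_bad_dyadic k a : 2 ^ a.+3 + 3 <= k -> k < 2 ^ a.+4 + 3 ->
  exists m, bad k m /\ 3 * k <= 2 * m + 24.
Proof.
set N := 2 ^ a.+3 => k_ge k_lt; rewrite expnS -/N in k_lt.
set i := N %/ 3; have N_eq : N = i * 3 + N %% 3 := divn_eq N 3.
have N_mod3 : N %% 3 = (if odd a then 1 else 2) by rewrite pow2_mod3 /=; case: odd.
case: (ltnP (i + N) k) => [iN_lt | k_le].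
- case odd_a: (odd a) N_mod3 => N_mod3.
    exists (3 * N - 3); split; last by lia.
    by apply: (bad_triple_sub3 _ _ i) => //; lia.
  exists (3 * N - 9); split; last by lia.
  by apply: (bad_triple_sub9 _ _ i) => //; lia.
- exists (2 * N - 1); split; last by lia.
  by apply: (bad_double_sub1 _ a.+1); lia.
Qed.

Lemma exists_bad k : 11 <= k -> exists m, bad k m /\ 3 * k <= 2 * m + 24.
Proof.
move=> k_ge; set u := (k - 3) %/ 8; have u_gt0 : 0 < u by rewrite divn_gt0 //; lia.
have u_ge := trunc_logP (ltnSn 1) u_gt0; have u_lt := trunc_log_ltn u (ltnSn 1).
have u_eq : k - 3 = u * 8 + (k - 3) %% 8 := divn_eq _ _.
have mod_lt : (k - 3) %% 8 < 8 := ltn_pmod _ (ltn0Sn 7).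
apply: (exists_bad_dyadic _ (trunc_log 2 u)); rewrite !expnS in u_lt *; lia.
Qed.

Local Open Scope ring_scope.

Lemma lt_ratio_of_linear (R : realFieldType) (eps : R) k m :
  0 < eps -> 12 / eps < k%:R -> (3 * k <= 2 * m + 24)%N ->
  3%:R / 2%:R - eps < m%:R / k%:R.
Proof.
move=> eps_gt0 k_gt; have k_gt0 : 0 < k%:R :> R by apply: lt_trans k_gt; rewrite divr_gt0.
have keps_gt : 12 < k%:R * eps by rewrite -ltr_pdivrMr.
rewrite -(ler_nat R) natrD !natrM => lin.
by rewrite ltr_pdivlMr // mulrBl; lra.
Qed.

Lemma le_ratio_of_linear (R : realFieldType) (eps : R) k m :
  0 <= eps -> (0 < k)%N -> (2 * m <= 3 * k)%N -> m%:R / k%:R <= 3%:R / 2%:R + eps.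
Proof.
move=> eps_ge0 k_gt0; have k_gt0' : 0 < k%:R :> R by rewrite ltr0n.
have keps_ge : 0 <= eps * k%:R by rewrite mulr_ge0 // ltW.
rewrite -(ler_nat R) !natrM => lin.
by rewrite ler_pdivrMr // mulrDl; lra.
Qed.

Theorem theorem2 :
  (forall eps : rat, 0 < eps ->
     exists K : nat, forall k : nat, (K <= k)%N ->
       exists m : nat, bad k m /\ 3%:R / 2%:R - eps < m%:R / k%:R)
  /\
  (forall eps : rat, 0 < eps ->
     forall K : nat, exists k : nat, (K <= k)%N /\ (0 < k)%N /\
       forall m : nat, bad k m -> m%:R / k%:R <= 3%:R / 2%:R + eps).
Proof.
split=> eps eps_gt0.
  exists (Num.Def.archi_bound (12 / eps) + 11)%N => k k_ge.
  have [|m [bad_m lin]] := exists_bad k; first by lia.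
  exists m; split=> //; apply: lt_ratio_of_linear lin => //.
  apply: lt_le_trans (archi_boundP _) _; first by rewrite divr_ge0 // ltW.
  by rewrite ler_nat (leq_trans (leq_addr _ _) k_ge).
move=> K; exists (2 ^ K.+1)%N; split; first by have := ltn_expl K.+1 (ltnSn 1); lia.
split=> [|m [odd_m [_ not_inF]]]; first exact: expn_gt0.
apply: le_ratio_of_linear; [exact: ltW | exact: expn_gt0 |].
have : ~~ (3 * 2 ^ K < m)%N by apply/negP => /(inF_pow2 _ _ odd_m).
by rewrite expnS; lia.
Qed.
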